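(* Let $k\ge 1$, $n_1,\dots,n_k\in\mathbb{N}$ and $m\in\mathbb{N}$ with $m\ge 2$. For each $j=1,\dots,k$ let $I_j:\ell_2^{n_j,\mathbb{R}}\to\ell_\infty^{N_j,\mathbb{R}}$ be an injective linear operator with $\|I_j\|\le 1$ and $\|I_j^{-1}\|\le\frac{m}{m-1}$, and put $c^j_{i}=I_j(e_{i})\in\mathbb{R}^{N_j}$ for $1\le i\le n_j$, with coordinates $c^j_i(s)$, $1\le s\le N_j$. Let $\rho=(\rho_{i_1,\dots,i_k})\in \mathbb{R}^{n_1}\otimes\cdots\otimes\mathbb{R}^{n_k}$, and let $V$ be the optimal value of the linear programming problem in the real variables $\lambda_{i_1,\dots,i_k}$ ($1\le i_j\le n_j$): maximize $\sum_{i_1,\dots,i_k=1}^{n_1,\dots,n_k}\rho_{i_1,\dots,i_k}\lambda_{i_1,\dots,i_k}$ subject to $$-1\le \sum_{i_1,\dots,i_k=1}^{n_1,\dots,n_k}\lambda_{i_1,\dots,i_k}\,c^1_{i_1}(s_1)\cdots c^k_{i_k}(s_k)\le 1\quad\text{for all } 1\le s_j\le N_j,\ 1\le j\le k.$$ Then $\pi(\rho)\le V\le \left(\frac{m}{m-1}\right)^k\pi(\rho)$, where $\pi(\rho)$ is the norm of $\rho$ in $\bigotimes_{j=1,\pi}^k\ell_2^{n_j,\mathbb{R}}$; that is, $V$ equals $\pi(\rho)$ up to a relative error bounded by $\left(\frac{m}{m-1}\right)^k-1$.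
   Context: $\ell_2^{n,\mathbb{R}}$ is $\mathbb{R}^n$ with the Euclidean norm, $\ell_\infty^{N,\mathbb{R}}$ is $\mathbb{R}^N$ with the sup-norm, and $e_1,e_2,\dots$ is the canonical basis. For injective $I$, $\|I^{-1}\|$ is the norm of the inverse defined on the range of $I$. Elements of $\mathbb{R}^{n_1}\otimes\cdots\otimes\mathbb{R}^{n_k}$ are identified with coefficient arrays $(\rho_{i_1,\dots,i_k})$ with respect to $e_{i_1}\otimes\cdots\otimes e_{i_k}$. The projective norm on $\bigotimes_{j=1}^k X_j$ (normed spaces $X_j$) is $\pi(u)=\inf\{\sum_{i=1}^r\|u^1_i\|\cdots\|u^k_i\| : u=\sum_{i=1}^r u^1_i\otimes\cdots\otimes u^k_i\}$, and $\bigotimes_{j=1,\pi}^k X_j$ denotes the tensor product with this norm. *)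

From HB Require Import structures.
From mathcomp Require Import all_boot all_order all_algebra.
From mathcomp Require Import classical_sets reals.
Set Implicit Arguments. Unset Strict Implicit. Unset Printing Implicit Defensive.
Import Order.TTheory GRing.Theory Num.Theory.
Local Open Scope ring_scope.
Local Open Scope classical_set_scope.

(* Multi-indices (i_1,...,i_k) with 1 <= i_j <= n_j (0-based here). *)
Definition multi_index (k : nat) (n : 'I_k -> nat) : finType :=
  {dffun forall j : 'I_k, 'I_(n j)}.

Definition norm2 {R : realType} {n : nat} (x : 'I_n -> R) : R :=
  Num.sqrt (\sum_(i < n) x i ^+ 2).

Definition normInf {R : realType} {N : nat} (y : 'I_N -> R) : R :=
  \big[Num.max/0]_(s < N) `|y s|.

(* The linear operator R^n -> R^N given by the vectors c_i = I(e_i). *)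
Definition apply_op {R : realType} {n N : nat} (c : 'I_n -> 'I_N -> R)
  (x : 'I_n -> R) : 'I_N -> R := fun s => \sum_(i < n) x i * c i s.

Definition proj_norm {R : realType} (k : nat) (n : 'I_k -> nat)
  (rho : multi_index n -> R) : R :=
  inf [set t : R | exists (r : nat) (u : 'I_r -> forall j : 'I_k, 'I_(n j) -> R),
         (forall idx : multi_index n,
             rho idx = \sum_(i < r) \prod_(j < k) u i j (idx j)) /\
         t = \sum_(i < r) \prod_(j < k) norm2 (u i j)].

Definition lp_feasible {R : realType} (k : nat) (n N : 'I_k -> nat)
  (c : forall j : 'I_k, 'I_(n j) -> 'I_(N j) -> R)
  (lam : multi_index n -> R) : Prop :=
  forall s : multi_index N,
    -1 <= \sum_(idx : multi_index n) lam idx * \prod_(j < k) c j (idx j) (s j) <= 1.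

Definition lp_value {R : realType} (k : nat) (n N : 'I_k -> nat)
  (c : forall j : 'I_k, 'I_(n j) -> 'I_(N j) -> R)
  (rho : multi_index n -> R) : R :=
  sup [set v : R | exists lam : multi_index n -> R,
         lp_feasible c lam /\ v = \sum_(idx : multi_index n) rho idx * lam idx].

From HB Require Import structures.
From mathcomp Require Import all_boot all_order all_algebra.
From mathcomp Require Import boolp classical_sets reals.
From mathcomp Require Import ring lra.
Set Implicit Arguments. Unset Strict Implicit. Unset Printing Implicit Defensive.
Import Order.TTheory GRing.Theory Num.Theory.
Local Open Scope ring_scope.

(* Upper bound: a feasible [lam] defines a multilinear form
   T(x_1, ..., x_k) = sum_i lam_i prod_j x_j(i_j) with |T| <= 1 when every x_j
   is a row c^j_.(s_j).  Freeing one slot x_j at a time: the vector v of the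
   values of T at the basis vectors in slot j satisfies |(I_j v)(s)| <= B for
   all s, hence ||v||_2 <= m/(m-1) B and |T| <= m/(m-1) B ||x_j||_2 by
   Cauchy-Schwarz.  So |T(x_1, ..., x_k)| <= (m/(m-1))^k prod_j ||x_j||_2,
   which bounds the objective by (m/(m-1))^k pi(rho) on every representation
   of rho.
   Lower bound: the Hahn-Banach theorem (in finite dimension, by one-step
   extensions) gives w with <rho, w> = pi(rho) and <x, w> <= pi(x) for all x.
   Since ||I_j|| <= 1 every row c^j_.(s) has Euclidean norm <= 1, so every
   row tensor c^1_.(s_1) (x) ... (x) c^k_.(s_k) has pi-norm <= 1 and w is
   feasible. *)

Section Euclidean.
Variables (R : realType) (n : nat).
Implicit Types (x y : 'I_n -> R).

Lemma norm2_ge0 x : 0 <= norm2 x.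
Proof. exact: sqrtr_ge0. Qed.

Lemma norm2Z (t : R) x : norm2 (fun i => t * x i) = `|t| * norm2 x.
Proof.
rewrite /norm2 (_ : \sum_i (t * x i) ^+ 2 = t ^+ 2 * \sum_i x i ^+ 2).
  by rewrite sqrtrM ?sqr_ge0 // sqrtr_sqr.
by rewrite mulr_sumr; apply: eq_bigr => i _; rewrite exprMn.
Qed.

Lemma norm_dot_le_norm2 x y : `|\sum_i x i * y i| <= norm2 x * norm2 y.
Proof.
set A := \sum_i x i ^+ 2; set B := \sum_i y i ^+ 2; set S := \sum_i x i * y i.
have A0 : 0 <= A by apply: sumr_ge0 => i _; exact: sqr_ge0.
have B0 : 0 <= B by apply: sumr_ge0 => i _; exact: sqr_ge0.
suff SAB : S ^+ 2 <= A * B.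
  by rewrite /norm2 -/A -/B -sqrtrM // -sqrtr_sqr ler_sqrt // mulr_ge0.
have [A_eq0 | A_neq0] := eqVneq A 0.
  have x0 i : x i = 0.
    apply/eqP; rewrite -sqrf_eq0; move/eqP: A_eq0; rewrite psumr_eq0 => [/allP|j _].
      by move/(_ i (mem_index_enum _)).
    exact: sqr_ge0.
  by rewrite /S big1 ?expr0n ?mulr_ge0 // => i _; rewrite x0 mul0r.
have : 0 <= A * (A * B - S ^+ 2).
  have <- : \sum_i (A * y i - S * x i) ^+ 2 = A * (A * B - S ^+ 2).
    transitivity (\sum_i (A ^+ 2 * y i ^+ 2 - (2 * A * S) * (x i * y i) + S ^+ 2 * x i ^+ 2)).
      by apply: eq_bigr => i _; ring.
    by rewrite big_split /= sumrB -!mulr_sumr -/A -/B -/S; ring.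
  by apply: sumr_ge0 => i _; exact: sqr_ge0.
by rewrite pmulr_rge0 ?subr_ge0 // lt_def A_neq0.
Qed.

End Euclidean.

Section OperatorRows.
Variables (R : realType) (n N : nat) (c : 'I_n -> 'I_N -> R).

Lemma norm2_row_le1 (s : 'I_N) :
  (forall x, normInf (apply_op c x) <= norm2 x) -> norm2 (c^~ s) <= 1.
Proof.
move=> c_le1; set x := c^~ s.
have xx : apply_op c x s = norm2 x ^+ 2.
  rewrite /norm2 sqr_sqrtr; last by apply: sumr_ge0 => i _; exact: sqr_ge0.
  by apply: eq_bigr => i _; rewrite expr2.
have : norm2 x ^+ 2 <= norm2 x.
  have := le_trans (le_bigmax 0 (fun t => `|apply_op c x t|) s) (c_le1 x).
  by rewrite xx ger0_norm ?sqr_ge0.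
by have := norm2_ge0 x; rewrite expr2; nra.
Qed.

Lemma norm_dot_le_of_op (M B : R) (v : 'I_n -> R) :
  (forall x, norm2 x <= M * normInf (apply_op c x)) -> 0 <= M -> 0 <= B ->
  (forall s, `|apply_op c v s| <= B) ->
  forall x, `|\sum_i x i * v i| <= norm2 x * (M * B).
Proof.
move=> c_inv M0 B0 v_le x; apply: le_trans (norm_dot_le_norm2 x v) _.
apply: ler_wpM2l; first exact: norm2_ge0.
apply: le_trans (c_inv v) (ler_wpM2l M0 _).
by apply: bigmax_le.
Qed.

End OperatorRows.

Section FiniteHahnBanach.
Local Open Scope classical_set_scope.
Variables (R : realType) (V : lmodType R) (p : V -> R).
Hypothesis pD : forall x y, p (x + y) <= p x + p y.
Hypothesis pZ : forall t x, p (t *: x) <= `|t| * p x.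

Lemma seminorm_ge0 x : 0 <= p x.
Proof.
have p0 : p 0 = 0.
  apply/eqP; rewrite eq_le; apply/andP; split.
    by have := pZ 0 0; rewrite normr0 mul0r scale0r.
  by have := pD 0 0; rewrite addr0 -subr_ge0 addrK.
have := pD x (- x); rewrite subrr p0 -scaleN1r.
have := pZ (-1) x; rewrite normrN normr1 mul1r; lra.
Qed.

Lemma seminormZ_pos t x : 0 < t -> p (t *: x) = t * p x.
Proof.
move=> t_gt0; apply/eqP; rewrite eq_le; apply/andP; split.
  by have := pZ t x; rewrite gtr0_norm.
have := pZ t^-1 (t *: x).
rewrite scalerA mulVf ?gt_eqF // scale1r gtr0_norm ?invr_gt0 // => le_x.
by rewrite -(ler_pM2l t_gt0) mulrA mulfV ?gt_eqF ?mul1r in le_x.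
Qed.

Variables (x0 : V) (I : finType) (e : I -> V).

(* The pair (s, w) describes the functional on span (x0 :: map e s) taking
   the value p x0 at x0 and w i at e i. *)
Definition span_val (s : seq I) (w : I -> R) (t : R) (a : I -> R) : R :=
  t * p x0 + \sum_(i <- s) a i * w i.
Definition span_vec (s : seq I) (t : R) (a : I -> R) : V :=
  t *: x0 + \sum_(i <- s) a i *: e i.
Definition dominated s w := forall t a, span_val s w t a <= p (span_vec s t a).

Lemma span_valD s w t1 t2 a1 a2 :
  span_val s w (t1 + t2) (fun i => a1 i + a2 i) = span_val s w t1 a1 + span_val s w t2 a2.
Proof. by rewrite /span_val; under eq_bigr do rewrite mulrDl; rewrite big_split /=; ring. Qed.

Lemma span_vecD s t1 t2 a1 a2 :
  span_vec s (t1 + t2) (fun i => a1 i + a2 i) = span_vec s t1 a1 + span_vec s t2 a2.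
Proof.
rewrite /span_vec; under eq_bigr do rewrite scalerDl.
by rewrite big_split /= scalerDl addrACA.
Qed.

Lemma span_valZ s w r t a : span_val s w (r * t) (fun i => r * a i) = r * span_val s w t a.
Proof.
rewrite /span_val mulrDr mulr_sumr mulrA.
by congr (_ + _); apply: eq_bigr => i _; rewrite mulrA.
Qed.

Lemma span_vecZ s r t a : span_vec s (r * t) (fun i => r * a i) = r *: span_vec s t a.
Proof.
rewrite /span_vec scalerDr scaler_sumr scalerA.
by congr (_ + _); apply: eq_bigr => i _; rewrite scalerA.
Qed.

Lemma dominated_nil w : dominated [::] w.
Proof.
move=> t a; rewrite /span_val /span_vec !big_nil !addr0.
have [t_gt0 | t_le0] := ltrP 0 t; first by rewrite seminormZ_pos.
exact: le_trans (mulr_le0_ge0 t_le0 (seminorm_ge0 _)) (seminorm_ge0 _).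
Qed.

Lemma dominated_cons s w i0 : i0 \notin s -> dominated s w ->
  exists al, dominated (i0 :: s) (fun i => if i == i0 then al else w i).
Proof.
move=> i0_s dom_w; set y := e i0.
set lo := fun t a => span_val s w t a - p (span_vec s t a - y).
set hi := fun t a => p (span_vec s t a + y) - span_val s w t a.
have lo_hi t a t' a' : lo t a <= hi t' a'.
  have := dom_w (t + t') (fun i => a i + a' i); rewrite span_valD span_vecD.
  have := pD (span_vec s t a - y) (span_vec s t' a' + y).
  rewrite addrACA addNr addr0 /lo /hi; lra.
set al := sup [set lo t a | t in setT & a in setT].
have lo_al t a : lo t a <= al.
  apply: ub_le_sup; last by exists t => //; exists a.
  by exists (hi 0 (fun=> 0)) => _ [t' _ [a' _ <-]]; exact: lo_hi.
have al_hi t a : al <= hi t a.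
  apply: ge_sup => [|_ [t' _ [a' _ <-]]]; last exact: lo_hi.
  by exists (lo 0 (fun=> 0)), 0 => //; exists (fun=> 0).
exists al => t a.
have -> : span_val (i0 :: s) (fun i => if i == i0 then al else w i) t a =
    span_val s w t a + a i0 * al.
  rewrite /span_val big_cons eqxx addrA addrAC; congr (_ + _ + _).
  by apply: eq_big_seq => i i_s; case: eqP => // i_i0; move: i0_s; rewrite -i_i0 i_s.
have -> : span_vec (i0 :: s) t a = span_vec s t a + a i0 *: y.
  by rewrite /span_vec big_cons addrA addrAC.
have [b_lt0 | b_gt0 | ->] := ltgtP (a i0) 0; last by rewrite mul0r scale0r !addr0.
- set r := - a i0; have r_gt0 : 0 < r by rewrite oppr_gt0.
  have := lo_al (r^-1 * t) (fun i => r^-1 * a i).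
  rewrite /lo span_valZ span_vecZ => le_al.
  have -> : span_vec s t a + a i0 *: y = r *: (r^-1 *: span_vec s t a - y).
    by rewrite scalerBr scalerA mulfV ?gt_eqF // scale1r scaleNr opprK.
  rewrite seminormZ_pos //.
  have := ler_wpM2l (ltW r_gt0) le_al; rewrite mulrBr mulrA mulfV ?gt_eqF // mul1r /r.
  lra.
- have := al_hi ((a i0)^-1 * t) (fun i => (a i0)^-1 * a i).
  rewrite /hi span_valZ span_vecZ => al_le.
  have -> : span_vec s t a + a i0 *: y = a i0 *: ((a i0)^-1 *: span_vec s t a + y).
    by rewrite scalerDr scalerA mulfV ?gt_eqF // scale1r.
  rewrite seminormZ_pos //.
  have := ler_wpM2l (ltW b_gt0) al_le; rewrite mulrBr mulrA mulfV ?gt_eqF // mul1r.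
  lra.
Qed.

Lemma dominated_exists (s : seq I) : uniq s -> exists w, dominated s w.
Proof.
elim: s => [|i0 s IH] /=; first by exists (fun=> 0); exact: dominated_nil.
case/andP => i0_s /IH[w dom_w]; have [al dom_al] := dominated_cons i0_s dom_w.
by eexists; exact: dom_al.
Qed.

Theorem hahn_banach_fin : exists w : I -> R, forall t (a : I -> R),
  t * p x0 + \sum_i a i * w i <= p (t *: x0 + \sum_i a i *: e i).
Proof.
have [w dom_w] := dominated_exists (enum_uniq I).
by exists w => t a; have := dom_w t a; rewrite /span_val /span_vec !big_enum.
Qed.

End FiniteHahnBanach.

Section ProjectiveNorm.
Local Open Scope classical_set_scope.
Variables (R : realType) (k : nat) (n : 'I_k -> nat).
Local Notation I := (multi_index n).
Implicit Types (x y : I -> R).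

Definition proj_reps x : set R :=
  [set t : R | exists (r : nat) (u : 'I_r -> forall j : 'I_k, 'I_(n j) -> R),
     (forall idx : I, x idx = \sum_(i < r) \prod_(j < k) u i j (idx j)) /\
     t = \sum_(i < r) \prod_(j < k) norm2 (u i j)].

Lemma proj_normE x : proj_norm x = inf (proj_reps x). Proof. by []. Qed.

Lemma proj_reps_ge0 x t : proj_reps x t -> 0 <= t.
Proof.
by case=> r [u [_ ->]]; apply: sumr_ge0 => i _; apply: prodr_ge0 => j _; exact: norm2_ge0.
Qed.

Lemma proj_norm_le x t : proj_reps x t -> proj_norm x <= t.
Proof. by rewrite proj_normE; apply: ge_inf; exists 0 => s; exact: proj_reps_ge0. Qed.

Lemma proj_norm_rank1 (v : forall j : 'I_k, 'I_(n j) -> R) :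
  proj_norm (fun idx : I => \prod_(j < k) v j (idx j)) <= \prod_(j < k) norm2 (v j).
Proof.
apply: proj_norm_le; exists 1%N, (fun=> v).
by split=> [idx|]; rewrite big_ord1.
Qed.

Hypothesis k_gt0 : (0 < k)%N.
Let j0 : 'I_k := Ordinal k_gt0.

(* x = sum_a x(a) e_a, each basis tensor e_a being a product of basis
   vectors, with the coefficient x(a) put in slot j0. *)
Lemma proj_reps_neq0 x : proj_reps x !=set0.
Proof.
pose u (i : 'I_#|I|) (j : 'I_k) (t : 'I_(n j)) : R :=
  (if j == j0 then x (enum_val i) else 1) * (t == enum_val i j)%:R.
exists (\sum_(i < #|I|) \prod_(j < k) norm2 (u i j)), #|I|, u; split => // idx.
have u_idx i : \prod_(j < k) u i j (idx j) = x (enum_val i) * (idx == enum_val i)%:R.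
  rewrite /u big_split /=; congr (_ * _).
    by rewrite (bigD1 j0) //= ?eqxx big1 ?mulr1 // => j /negbTE ->.
  have [->|idx_neq] := eqVneq idx (enum_val i); first by rewrite big1 // => j _; rewrite eqxx.
  have [j idx_j] : exists j, idx j != enum_val i j.
    apply/existsP; apply: contraR idx_neq => /existsPn idx_eq.
    by apply/eqP/ffunP => j; apply/eqP; move: (idx_eq j); rewrite negbK.
  by rewrite (bigD1 j) //= (negbTE idx_j) mul0r.
under eq_bigr do rewrite u_idx.
rewrite -(big_enum_val (fun a : I => x a * (idx == a)%:R)) /=.
rewrite (bigD1 idx) //= eqxx mulr1 big1 ?addr0 // => a /negbTE.
by rewrite eq_sym => ->; rewrite mulr0.
Qed.

Lemma proj_norm_ge x b : (forall t, proj_reps x t -> b <= t) -> b <= proj_norm x.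
Proof. by rewrite proj_normE; exact: lb_le_inf (proj_reps_neq0 x). Qed.

Lemma proj_norm_ge0 x : 0 <= proj_norm x.
Proof. by apply: proj_norm_ge => t; exact: proj_reps_ge0. Qed.

Lemma proj_normD x y :
  proj_norm (fun idx => x idx + y idx) <= proj_norm x + proj_norm y.
Proof.
have sum_reps t1 t2 : proj_reps x t1 -> proj_reps y t2 ->
    proj_norm (fun idx => x idx + y idx) <= t1 + t2.
  move=> [r1 [u1 [x_u1 ->]]] [r2 [u2 [y_u2 ->]]].
  pose u (i : 'I_(r1 + r2)) := match split i with inl a => u1 a | inr b => u2 b end.
  apply: proj_norm_le; exists (r1 + r2), u.
  split=> [idx|]; rewrite big_split_ord /= ?x_u1 ?y_u2 /u; congr (_ + _);
    by apply: eq_bigr => i _; rewrite ?(unsplitK (inl i)) ?(unsplitK (inr i)).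
rewrite -lerBlDl; apply: proj_norm_ge => t2 y_t2.
rewrite lerBlDl -lerBlDr; apply: proj_norm_ge => t1 x_t1.
by rewrite lerBlDr; exact: sum_reps.
Qed.

Lemma proj_normZ (t : R) x : proj_norm (fun idx => t * x idx) <= `|t| * proj_norm x.
Proof.
have scale_reps s : proj_reps x s -> proj_norm (fun idx => t * x idx) <= `|t| * s.
  move=> [r [u [x_u ->]]].
  pose u' (i : 'I_r) (j : 'I_k) : 'I_(n j) -> R :=
    if j == j0 then (fun a => t * u i j a) else u i j.
  have scale_j0 (F : forall j, ('I_(n j) -> R) -> R) i :
      F j0 (fun a => t * u i j0 a) * \prod_(j < k | j != j0) F j (u i j) =
      \prod_(j < k) F j (u' i j).
    by rewrite [RHS](bigD1 j0) //= /u' eqxx; congr (_ * _); apply: eq_bigr => j /negbTE ->.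
  apply: proj_norm_le; exists r, u'; split => [idx|].
    rewrite x_u mulr_sumr; apply: eq_bigr => i _; rewrite (bigD1 j0) //= mulrA.
    exact: (scale_j0 (fun j f => f (idx j))).
  rewrite mulr_sumr; apply: eq_bigr => i _; rewrite (bigD1 j0) //= mulrA -norm2Z.
  exact: (scale_j0 (fun j f => norm2 f)).
have [t0 | t_neq0] := eqVneq t 0.
  have [s x_s] := proj_reps_neq0 x.
  by apply: le_trans (scale_reps s x_s) _; rewrite t0 normr0 !mul0r.
have t_gt0 : 0 < `|t| by rewrite normr_gt0.
rewrite -ler_pdivrMl //; apply: proj_norm_ge => s x_s.
by rewrite ler_pdivrMl // scale_reps.
Qed.

Lemma proj_norm0 : proj_norm (fun _ : I => 0 : R) = 0.
Proof.
apply/eqP; rewrite eq_le proj_norm_ge0 andbT.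
by have := proj_normZ 0 (fun=> 0); rewrite normr0 !mul0r.
Qed.

Lemma proj_norm_dual (rho : I -> R) : exists w : I -> R,
  proj_norm rho <= \sum_idx rho idx * w idx /\
  forall x, \sum_idx x idx * w idx <= proj_norm x.
Proof.
pose p (f : {ffun I -> R^o}) := proj_norm f.
have pD f g : p (f + g) <= p f + p g.
  by rewrite /p (_ : f + g = (fun idx => f idx + g idx) :> (I -> R)) ?proj_normD //;
    apply: funext => idx; rewrite ffunE.
have pZ t f : p (t *: f) <= `|t| * p f.
  by rewrite /p (_ : t *: f = (fun idx => t * f idx) :> (I -> R)) ?proj_normZ //;
    apply: funext => idx; rewrite ffunE.
pose rhoF : {ffun I -> R^o} := [ffun idx => rho idx].
pose e (a : I) : {ffun I -> R^o} := [ffun idx => (idx == a)%:R].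
have [w dom_w] := hahn_banach_fin pD pZ rhoF e.
have coords t a : t *: rhoF + \sum_i a i *: e i =
    (fun idx => t * rho idx + a idx) :> (I -> R).
  apply: funext => idx; rewrite !ffunE sum_ffunE (bigD1 idx) //= !ffunE eqxx.
  rewrite big1 => [|b /negbTE]; last by rewrite !ffunE eq_sym => ->; rewrite scaler0.
  by rewrite addr0 [_ *: 1]mulr1.
have rho_p : p rhoF = proj_norm rho.
  by congr proj_norm; apply: funext => idx; rewrite ffunE.
exists w; split => [|x].
  have := dom_w 1 (fun idx => - rho idx); rewrite rho_p /p coords mul1r.
  rewrite (_ : (fun idx => 1 * rho idx - rho idx) = fun=> 0) ?proj_norm0; last first.
    by apply: funext => idx; rewrite mul1r subrr.
  by under eq_bigr do rewrite mulNr; rewrite sumrN subr_le0.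
have := dom_w 0 x; rewrite /p coords mul0r add0r.
rewrite (_ : (fun idx => 0 * rho idx + x idx) = x); last first.
  by apply: funext => idx; rewrite mul0r add0r.
by under eq_bigr do rewrite mulrC.
Qed.

End ProjectiveNorm.

Lemma lp_feasible_of_dual (R : realType) (k : nat) (n N : 'I_k -> nat)
    (c : forall j : 'I_k, 'I_(n j) -> 'I_(N j) -> R) (w : multi_index n -> R) :
  (0 < k)%N ->
  (forall j x, normInf (apply_op (c j) x) <= norm2 x) ->
  (forall x, \sum_idx x idx * w idx <= proj_norm x) ->
  lp_feasible c w.
Proof.
move=> k_gt0 c_le1 w_le s; pose g (idx : multi_index n) := \prod_(j < k) c j (idx j) (s j).
under eq_bigr do rewrite mulrC.
change (-1 <= \sum_idx g idx * w idx <= 1).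
have g_le1 : proj_norm g <= 1.
  apply: le_trans (proj_norm_rank1 (fun j i => c j i (s j))) _.
  by apply: prodr_ile1 => j _; rewrite norm2_ge0 norm2_row_le1.
have neg_g : - \sum_idx g idx * w idx <= proj_norm (fun idx => -1 * g idx).
  by have := w_le (fun idx => -1 * g idx); under eq_bigr do rewrite mulN1r mulNr; rewrite sumrN.
have := proj_normZ k_gt0 (-1) g; rewrite normrN normr1 mul1r => neg_le.
have pos_g := w_le g; apply/andP; split; lra.
Qed.

Section MultilinearBound.
Variables (R : realType) (k : nat) (n N : 'I_k -> nat).
Variables (c : forall j : 'I_k, 'I_(n j) -> 'I_(N j) -> R) (lam : multi_index n -> R).
Arguments c : clear implicits.

(* The arguments of the multilinear form of [lam] are taken in [nat -> R] and
   read on [0, n j) only, so that one slot can be replaced without casts. *)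
Definition pad m (f : 'I_m -> R) : nat -> R := fun t => oapp f 0 (insub t).

Definition form_at (X : 'I_k -> nat -> R) : R :=
  \sum_(idx : multi_index n) lam idx * \prod_(j < k) X j (idx j).

Definition set_slot (X : 'I_k -> nat -> R) (j0 : 'I_k) (a : nat -> R) : 'I_k -> nat -> R :=
  fun j => if j == j0 then a else X j.

Definition slot_norm (j : 'I_k) (a : nat -> R) : R := norm2 (fun i : 'I_(n j) => a i).

Lemma padE m (f : 'I_m -> R) (i : 'I_m) : pad f i = f i.
Proof. by rewrite /pad valK. Qed.

Lemma set_slot_id X j0 : set_slot X j0 (X j0) = X.
Proof. by apply: funext => j; rewrite /set_slot; case: eqP => [->|]. Qed.

Lemma prod_set_slot X j0 a (idx : multi_index n) :
  \prod_(j < k) set_slot X j0 a j (idx j) = a (idx j0) * \prod_(j < k | j != j0) X j (idx j).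
Proof.
rewrite (bigD1 j0) //= /set_slot eqxx; congr (_ * _).
by apply: eq_bigr => j /negbTE ->.
Qed.

Lemma form_at_set_slot X j0 a :
  form_at (set_slot X j0 a) =
  \sum_(i < n j0) a i * form_at (set_slot X j0 (fun t => (t == i)%:R)).
Proof.
rewrite /form_at; under eq_bigr do rewrite prod_set_slot.
under [RHS]eq_bigr => i _ do (under eq_bigr do rewrite prod_set_slot; rewrite mulr_sumr).
rewrite exchange_big /=; apply: eq_bigr => idx _.
rewrite (bigD1 (idx j0)) //= eqxx [X in _ + X]big1 ?addr0 => [|i /negbTE].
  by rewrite mulr1n; ring.
by move=> i_neq; rewrite (val_eqE (idx j0) i) eq_sym i_neq mulr0n !mul0r !mulr0.
Qed.

Variable M : R.
Hypothesis M_gt0 : 0 < M.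
Hypothesis lam_feasible : lp_feasible c lam.
Hypothesis c_inv : forall (j : 'I_k) (x : 'I_(n j) -> R),
  norm2 x <= M * normInf (apply_op (c j) x).

Lemma form_at_le p : (p <= k)%N -> forall X : 'I_k -> nat -> R,
  (forall j : 'I_k, (p <= j)%N -> exists s : 'I_(N j), forall i : 'I_(n j), X j i = c j i s) ->
  `|form_at X| <= M ^+ p * \prod_(j < k | (j < p)%N) slot_norm j (X j).
Proof.
elim: p => [|p IH] p_le X X_rows.
  have [s X_s] := fin_all_exists (fun j : 'I_k => X_rows j (leq0n j)).
  rewrite expr0 mul1r big_pred0 // ler_norml.
  have -> : form_at X = \sum_idx lam idx * \prod_(j < k) c j (idx j) ([ffun j => s j] j).
    by apply: eq_bigr => idx _; congr (_ * _); apply: eq_bigr => j _; rewrite ffunE X_s.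
  exact: lam_feasible.
set j0 : 'I_k := Ordinal p_le.
set P := \prod_(j < k | (j < p)%N) slot_norm j (X j).
have P_ge0 : 0 <= P by apply: prodr_ge0 => j _; exact: norm2_ge0.
pose v (i : 'I_(n j0)) := form_at (set_slot X j0 (fun t => (t == i)%:R)).
have v_rows s : `|apply_op (c j0) v s| <= M ^+ p * P.
  have -> : apply_op (c j0) v s = form_at (set_slot X j0 (pad (c j0 ^~ s))).
    by rewrite form_at_set_slot; apply: eq_bigr => i _; rewrite padE mulrC.
  apply: le_trans (IH (ltnW p_le) _ _) _.
    move=> j p_j; rewrite /set_slot; case: eqP => [->|j_neq]; first by exists s => i; rewrite padE.
    apply: X_rows; rewrite ltn_neqAle p_j andbT; apply/eqP => p_eq.
    by apply: j_neq; apply: val_inj; rewrite /= -p_eq.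
  rewrite [X in _ * X](_ : _ = P) //.
  apply: eq_bigr => j j_p; rewrite /set_slot; case: eqP => // j_j0.
  by move: j_p; rewrite j_j0 ltnn.
have -> : \prod_(j < k | (j < p.+1)%N) slot_norm j (X j) = slot_norm j0 (X j0) * P.
  rewrite (bigD1 j0) /= ?ltnSn //; congr (_ * _); apply: eq_bigl => j.
  by rewrite -val_eqE /= ltnS; case: ltngtP.
rewrite -{1}(set_slot_id X j0) form_at_set_slot.
have -> : M ^+ p.+1 * (slot_norm j0 (X j0) * P) = slot_norm j0 (X j0) * (M * (M ^+ p * P)).
  by rewrite exprS; ring.
have MP_ge0 : 0 <= M ^+ p * P by rewrite mulr_ge0 // exprn_ge0 // ltW.
exact: norm_dot_le_of_op (@c_inv j0) (ltW M_gt0) MP_ge0 v_rows _.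
Qed.

Lemma lp_objective_le_rep r (u : 'I_r -> forall j : 'I_k, 'I_(n j) -> R)
    (rho : multi_index n -> R) :
  (forall idx, rho idx = \sum_(i < r) \prod_(j < k) u i j (idx j)) ->
  \sum_idx rho idx * lam idx <= M ^+ k * \sum_(i < r) \prod_(j < k) norm2 (u i j).
Proof.
move=> rho_u.
have -> : \sum_idx rho idx * lam idx = \sum_(i < r) form_at (fun j => pad (u i j)).
  under eq_bigr do rewrite rho_u mulr_suml.
  rewrite exchange_big /=; apply: eq_bigr => i _; apply: eq_bigr => idx _.
  by rewrite mulrC; congr (_ * _); apply: eq_bigr => j _; rewrite padE.
rewrite mulr_sumr; apply: ler_sum => i _; apply: le_trans (ler_norm _) _.
apply: le_trans (form_at_le (leqnn k) _) _ => [j|].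
  by rewrite leqNgt ltn_ord.
rewrite [X in _ * X](_ : _ = \prod_(j < k) norm2 (u i j)) //.
apply: eq_big => [j|j _]; first exact: ltn_ord.
by congr Num.sqrt; apply: eq_bigr => i0 _; rewrite padE.
Qed.

Lemma lp_objective_le (rho : multi_index n -> R) : (0 < k)%N ->
  \sum_idx rho idx * lam idx <= M ^+ k * proj_norm rho.
Proof.
move=> k_gt0; rewrite -ler_pdivrMl ?exprn_gt0 //.
apply: proj_norm_ge => // t [r [u [rho_u ->]]].
by rewrite ler_pdivrMl ?exprn_gt0 // lp_objective_le_rep.
Qed.

End MultilinearBound.

Theorem proposition1 (R : realType) (k : nat) (n N : 'I_k -> nat) (m : nat)
  (c : forall j : 'I_k, 'I_(n j) -> 'I_(N j) -> R)
  (rho : multi_index n -> R) :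
  (1 <= k)%N -> (2 <= m)%N ->
  (forall j : 'I_k, injective (apply_op (c j))) ->
  (forall (j : 'I_k) (x : 'I_(n j) -> R), normInf (apply_op (c j) x) <= norm2 x) ->
  (forall (j : 'I_k) (x : 'I_(n j) -> R),
      norm2 x <= (m%:R / (m%:R - 1)) * normInf (apply_op (c j) x)) ->
  proj_norm rho <= lp_value c rho <= (m%:R / (m%:R - 1)) ^+ k * proj_norm rho.
Proof.
(* Injectivity is implied by the lower bound on the I_j, hence unused. *)
move=> k_gt0 m_ge2 _ c_le1 c_inv; set M : R := m%:R / (m%:R - 1).
have M_gt0 : 0 < M.
  have m_gt1 : 1 < m%:R :> R by rewrite ltr1n.
  by rewrite divr_gt0 ?subr_gt0 // (lt_trans ltr01).
have objective_le lam : lp_feasible c lam -> \sum_idx rho idx * lam idx <= M ^+ k * proj_norm rho.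
  by move=> lam_feasible; exact: lp_objective_le.
have [w [rho_le w_le]] := proj_norm_dual k_gt0 rho.
have w_feasible := lp_feasible_of_dual k_gt0 c_le1 w_le.
rewrite /lp_value; apply/andP; split.
  apply: le_trans rho_le (ub_le_sup _ _); last by exists w.
  by exists (M ^+ k * proj_norm rho) => _ [lam [/objective_le ? ->]].
by apply: ge_sup => [|_ [lam [/objective_le ? ->]]] //; exists (\sum_idx rho idx * w idx), w.
Qed.
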